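(* Let $(p_\lambda(\mathbf y))_{\lambda\in\mathcal P}$ be a full sequence of symmetric functions. Then $(p_\lambda)$ is of binomial type if and only if there exists a quasi-genus $G$ such that $(p_\lambda)$ is associated with $G$.
   Context: **Partitions and the order.** $\mathcal P$ is the set of integer partitions. Partitions of $n$ are totally ordered by Macdonald's reverse lexicographic order: $\lambda>\mu$ iff the first nonzero difference $\lambda_i-\mu_i$ is positive. **Full sequence.** A nonzero homogeneous symmetric function $p$ of degree $n$, written $p=\sum_\lambda c_\lambda m_\lambda$ in monomial symmetric functions, has exact degree equal to the largest $\lambda\vdash n$ with $c_\lambda\ne0$. A full sequence is a family $(p_\lambda(\mathbf y))_{\lambda\in\mathcal P}$ of homogeneous symmetric functions in $\mathbf y=(y_1,y_2,\dots)$ with each $p_\lambda$ of exact degree $\lambda$. **Vector conventions.** For a vector $\alpha$ of nonnegative integers with finite support, $p_\alpha$ (resp. $G_\alpha$) denotes the value at the partition obtained by sorting $\alpha$ into weakly decreasing order. For vectors we write $\alpha!=\prod_i\alpha_i!$ and $|\alpha|=\sum_i\alpha_i$, and $\binom{\lambda}{\alpha}=\frac{\lambda!}{\alpha!(\lambda-\alpha)!}$ for $0\le\alpha\le\lambda$ componentwise. **Binomial type.** $(p_\lambda)$ is of binomial type if, for disjoint variable sets $\mathbf y,\mathbf z$ and every $\lambda$, $$p_\lambda(\mathbf y\cup\mathbf z)=\sum_{\alpha}\binom{\lambda}{\alpha}p_\alpha(\mathbf y)\,p_{\lambda-\alpha}(\mathbf z),$$ where $\alpha$ ranges over vectors with $0\le\alpha\le\lambda$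 (viewing $\lambda=(\lambda_1,\dots,\lambda_{\ell(\lambda)})$). **Quasi-genus.** A quasi-genus is an assignment of a complex number $G_\lambda$ to each partition $\lambda$ (equivalently a functor from set partitions under relabeling to $\mathbb C$, depending only on block type), with $G_\emptyset=1$. **Association.** $(p_\lambda)$ is associated with $G$ (i.e. it enumerates $G$-enriched functions from a set partitioned by type $\lambda$ to $\{y_1,y_2,\dots\}$) if for every $\lambda$ $$p_\lambda(\mathbf y)=\sum\frac{\lambda!}{\prod_j\alpha^{(j)}!}\prod_{j\ge1}G_{\alpha^{(j)}}\,y_j^{|\alpha^{(j)}|}.$$ The sum is over families $(\alpha^{(j)})_{j\ge1}$ of vectors in $\mathbb Z_{\ge0}^{\ell(\lambda)}$, all but finitely many zero, with $\sum_j\alpha^{(j)}=\lambda$. *)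

From HB Require Import structures.
From mathcomp Require Import all_boot all_order all_algebra.
Set Implicit Arguments. Unset Strict Implicit. Unset Printing Implicit Defensive.
Import Order.TTheory GRing.Theory Num.Theory.

Definition is_partition (l : seq nat) : bool :=
  sorted geq l && all (fun x => 0 < x) l.

Definition ptn (a : seq nat) : seq nat := sort geq [seq x <- a | 0 < x].

(* Macdonald's reverse lexicographic order: revlex_gt l m  iff the first
   nonzero difference l_i - m_i (sequences padded by zeros) is positive. *)
Fixpoint revlex_gt (l m : seq nat) : bool :=
  match l, m with
  | [::], _ => false
  | x :: l', [::] => has (fun y => 0 < y) (x :: l')
  | x :: l', y :: m' => (y < x) || ((x == y) && revlex_gt l' m')
  end.

(* A symmetric function (in y_1, y_2, ...) over F is represented by its
   coefficients in the monomial basis: c mu = coefficient of m_mu, for mu a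
   partition.  Values at non-partitions are irrelevant. *)
Definition symfun (F : Type) := seq nat -> F.

(* Coefficient of the monomial y_1^{b_1} ... y_k^{b_k} (b a finitely
   supported exponent vector) in the symmetric function c. *)
Definition mcoef (F : Type) (c : symfun F) (b : seq nat) : F := c (ptn b).

Section Defs.
Variable F : numClosedFieldType.
Local Open Scope ring_scope.

Definition exact_degree (c : symfun F) (lam : seq nat) : Prop :=
  c lam != 0 /\
  forall mu, is_partition mu -> c mu != 0 ->
    sumn mu = sumn lam /\ ~~ revlex_gt mu lam.

Definition full_sequence (p : seq nat -> symfun F) : Prop :=
  forall lam, is_partition lam -> exact_degree (p lam) lam.

Fixpoint boxes (lam : seq nat) : seq (seq nat) :=
  match lam with
  | [::] => [:: [::]]
  | x :: l => [seq i :: s | i <- iota 0 x.+1, s <- boxes l]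
  end.

Definition vsub (lam a : seq nat) : seq nat := [seq (x.1 - x.2)%N | x <- zip lam a].

Definition vbinom (lam a : seq nat) : nat := (\prod_(x <- zip lam a) 'C(x.1, x.2))%N.

Definition vfact (a : seq nat) : nat := (\prod_(x <- a) x`!)%N.

(* Binomial type, written out on monomial coefficients: the coefficient of
   y^b z^g in p_lam(y u z) is the coefficient of the monomial with exponent
   multiset b ++ g in p_lam, and the coefficient of y^b z^g in
   p_a(y) p_{lam-a}(z) is [y^b]p_a * [z^g]p_{lam-a}. *)
Definition binomial_type (p : seq nat -> symfun F) : Prop :=
  forall lam, is_partition lam ->
  forall b g : seq nat,
    mcoef (p lam) (b ++ g) =
    \sum_(a <- boxes lam)
       (vbinom lam a)%:R * mcoef (p (ptn a)) b * mcoef (p (ptn (vsub lam a))) g.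

(* A quasi-genus: a value G mu for each partition mu, with G [::] = 1.
   G_a for a vector a means G (ptn a). *)
Definition quasi_genus (G : seq nat -> F) : Prop := G [::] = 1.

Fixpoint families (lam : seq nat) (k : nat) : seq (seq (seq nat)) :=
  match k with
  | 0 => [:: [::]]
  | k'.+1 => [seq a :: f | a <- boxes lam, f <- families lam k']
  end.

Definition vsum (n : nat) (f : seq (seq nat)) : seq nat :=
  foldr (fun a acc => [seq (x.1 + x.2)%N | x <- zip a acc]) (nseq n 0) f.

(* Association, written out on monomial coefficients: the coefficient of
   y_1^{b_1} ... y_k^{b_k} in
     sum lam!/prod_j a^(j)! prod_j G_{a^(j)} y_j^{|a^(j)|}
   is the sum over families (a^(1..k)) with sum_j a^(j) = lam and
   |a^(j)| = b_j (all a^(j) with j > k are then 0, contributing factor 1). *)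
Definition associated (p : seq nat -> symfun F) (G : seq nat -> F) : Prop :=
  forall lam, is_partition lam ->
  forall b : seq nat,
    mcoef (p lam) b =
    \sum_(f <- families lam (size b) |
            (vsum (size lam) f == lam) && ([seq sumn a | a <- f] == b))
       ((vfact lam)%:R / (\prod_(a <- f) vfact a)%N%:R *
        \prod_(a <- f) G (ptn a)).

End Defs.

From HB Require Import structures.
From mathcomp Require Import all_boot all_order all_algebra.
From mathcomp Require Import ring zify.
Set Implicit Arguments. Unset Strict Implicit. Unset Printing Implicit Defensive.
Import Order.TTheory GRing.Theory Num.Theory.

(* Write conv_v(h) := sum_(a <= v) binom(v, a) h(a, v - a) for the binomial
   convolution, so that binomial type reads [p_v](b ++ g) = conv_v([p_a](b) [p_c](g)).
   The coefficients A_G(v, b) of the association formula satisfy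
   A_G(v, [::]) = [|v| = 0] and A_G(v, b1 :: b) = conv_v([|a| = b1] G_a A_G(c, b)):
   one splits off the first variable.  Since conv is associative with unit
   [|a| = 0], the recursion gives A_G(v, b ++ g) = conv_v(A_G(a, b) A_G(c, g)),
   so associated sequences are of binomial type.  Conversely, splitting off one
   variable in the binomial identity and using homogeneity shows that [p_v](b)
   obeys the same recursion for G_mu := [y_1^|mu|] p_mu, hence equals A_G(v, b).
   Everything depends on a vector only through its sorted type ptn, which
   makes conv compatible with indexing p by ptn a. *)

Lemma mem_allpairs_cons (T : eqType) (A : seq T) (B : seq (seq T)) y z :
  (y :: z \in [seq a :: w | a <- A, w <- B]) = (y \in A) && (z \in B).
Proof.
apply/allpairsP/andP => [[[a w] [/= ha hw [-> ->]]] //|[ha hw]].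
by exists (y, z).
Qed.

Lemma nil_allpairs_cons (T : eqType) (A : seq T) (B : seq (seq T)) :
  ([::] \in [seq a :: w | a <- A, w <- B]) = false.
Proof. by apply/allpairsP => -[[a w] [_ _]]. Qed.

Lemma allpairs_cons_uniq (T : eqType) (A : seq T) (B : seq (seq T)) :
  uniq A -> uniq B -> uniq [seq a :: w | a <- A, w <- B].
Proof. by move=> uA uB; apply: allpairs_uniq => // -[a w] [a' w'] _ _ [-> ->]. Qed.

Lemma boxes_cons x l :
  boxes (x :: l) = [seq i :: s | i <- iota 0 x.+1, s <- boxes l].
Proof. by []. Qed.

Lemma families_cons v k :
  families v k.+1 = [seq a :: f | a <- boxes v, f <- families v k].
Proof. by []. Qed.

Lemma mem_boxes v s : (s \in boxes v) = all2 leq s v.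
Proof.
elim: v s => [|x l IH] [|i s] //; rewrite boxes_cons ?nil_allpairs_cons //.
by rewrite mem_allpairs_cons IH mem_iota ltnS.
Qed.

Lemma uniq_boxes v : uniq (boxes v).
Proof. by elim: v => // x l IH; rewrite boxes_cons allpairs_cons_uniq ?iota_uniq. Qed.

Lemma mem_families v k f :
  (f \in families v k) = (size f == k) && all (all2 leq ^~ v) f.
Proof.
elim: k f => [|k IH] [|a f] //; rewrite families_cons ?nil_allpairs_cons //.
by rewrite mem_allpairs_cons IH mem_boxes /= eqSS andbCA.
Qed.

Lemma uniq_families v k : uniq (families v k).
Proof. by elim: k => // k IH; rewrite families_cons allpairs_cons_uniq ?uniq_boxes. Qed.

Lemma size_all2_leq (s t : seq nat) : all2 leq s t -> size s = size t.
Proof. by elim: s t => [|x s IH] [|y t] //= /andP[_ /IH ->]. Qed.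

Lemma all2_leq_trans (s t u : seq nat) :
  all2 leq s t -> all2 leq t u -> all2 leq s u.
Proof.
elim: s t u => [|x s IH] [|y t] [|z u] //= /andP[le_xy le_st] /andP[le_yz le_tu].
by rewrite (leq_trans le_xy le_yz) (IH _ _ le_st le_tu).
Qed.

Definition vadd (a s : seq nat) : seq nat := [seq (x.1 + x.2)%N | x <- zip a s].

Lemma vsum_cons n a f : vsum n (a :: f) = vadd a (vsum n f).
Proof. by []. Qed.

Lemma size_vadd a s : size a = size s -> size (vadd a s) = size a.
Proof. by move=> e; rewrite size_map size_zip e minnn. Qed.

Lemma size_vsum n f : all (fun a => size a == n) f -> size (vsum n f) = n.
Proof.
elim: f => [|a f IH] /=; first by rewrite size_nseq.
by move=> /andP[/eqP ea /IH ef]; rewrite size_vadd ea // ef.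
Qed.

Lemma vleq_addr a s : size a = size s -> all2 leq a (vadd a s).
Proof. by elim: a s => [|x a IH] [|y s] //= [/IH ->]; rewrite leq_addr. Qed.

Lemma vleq_addl a s : size a = size s -> all2 leq s (vadd a s).
Proof. by elim: a s => [|x a IH] [|y s] //= [/IH ->]; rewrite leq_addl. Qed.

Lemma vleq_subr v a : size a = size v -> all2 leq (vsub v a) v.
Proof. by elim: v a => [|x v IH] [|y a] //= [/IH ->]; rewrite leq_subr. Qed.

Lemma vadd_eq_vsub a s v : all2 leq a v -> size s = size v ->
  (vadd a s == v) = (s == vsub v a).
Proof.
elim: v a s => [|x v IH] [|y a] [|z s] //= /andP[le_yx le_av] [e].
rewrite /vadd /= -/(vadd a s) !eqseq_cons IH //; congr andb.
by apply/eqP/eqP => /=; lia.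
Qed.

Lemma vleq_vsum n f c : all (fun a => size a == n) f -> c \in f ->
  all2 leq c (vsum n f).
Proof.
elim: f => // a f IH /andP[/eqP ea ef]; rewrite inE vsum_cons.
have e : size a = size (vsum n f) by rewrite size_vsum.
case/predU1P => [-> | cf]; first exact: vleq_addr.
exact: all2_leq_trans (IH ef cf) (vleq_addl e).
Qed.

Lemma vsum_nil_eq n v : (vsum n [::] == v) = (size v == n) && (sumn v == 0).
Proof.
elim: v n => [|x v IH] [|n] //=; rewrite eqseq_cons IH eqSS addn_eq0 eq_sym.
by rewrite andbCA.
Qed.

Lemma vfact_vbinom v a : all2 leq a v ->
  vfact v = (vbinom v a * vfact a * vfact (vsub v a))%N.
Proof.
rewrite /vfact /vbinom; elim: v a => [|x v IH] [|y a] //=; rewrite ?big_nil //.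
case/andP=> le_yx /IH e; rewrite !big_cons e -(bin_fact le_yx); ring.
Qed.

Lemma vfact_eq1 v : sumn v = 0 -> vfact v = 1.
Proof.
rewrite /vfact; elim: v => [|x v IH] /=; rewrite ?big_nil // big_cons.
by move/eqP; rewrite addn_eq0 => /andP[/eqP -> /eqP/IH ->].
Qed.

Lemma vfact_gt0 a : (0 < vfact a)%N.
Proof. by apply: prodn_gt0 => i; rewrite fact_gt0. Qed.

Lemma ptn_eqP a a' :
  reflect (ptn a = ptn a') (perm_eq [seq x <- a | 0 < x] [seq x <- a' | 0 < x]).
Proof.
apply: perm_sortP => [x y | y x z | x y].
- exact: leq_total.
- by move=> /= le_yx le_zy; apply: leq_trans le_zy le_yx.
- by rewrite /= andbC -eqn_leq => /eqP.
Qed.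

Lemma ptn_perm s s' : perm_eq s s' -> ptn s = ptn s'.
Proof. by move=> pss'; apply/ptn_eqP; apply: perm_filter. Qed.

Lemma ptn_cons i s s' : ptn s = ptn s' -> ptn (i :: s) = ptn (i :: s').
Proof. by move/ptn_eqP => pss'; apply/ptn_eqP => /=; case: ifP; rewrite ?perm_cons. Qed.

Lemma ptn_cons0 s : ptn (0 :: s) = ptn s.
Proof. by []. Qed.

Lemma ptn_id a : ptn (ptn a) = ptn a.
Proof.
apply/ptn_eqP; have /all_filterP -> : all (fun x => 0 < x) (ptn a).
  by rewrite all_sort filter_all.
by rewrite /ptn perm_sort.
Qed.

Lemma sumn_ptn b : sumn (ptn b) = sumn b.
Proof.
rewrite /ptn (perm_sumn (permEl (perm_sort _ _))).
by elim: b => //= x b IH; case: x => //= x; rewrite IH.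
Qed.

Lemma ptn_partition b : is_partition (ptn b).
Proof.
by rewrite /is_partition sort_sorted ?all_sort ?filter_all // => x y; apply: leq_total.
Qed.

Lemma partition_sumn_eq0 lam : is_partition lam -> (sumn lam == 0) = (lam == [::]).
Proof. by case: lam => // x l /andP[_ /= /andP[]]; rewrite addn_eq0; case: x. Qed.

Lemma mul_bin_trinomial x i j : (i + j <= x)%N ->
  ('C(x, i) * 'C(x - i, j) = 'C(x, i + j) * 'C(i + j, i))%N.
Proof.
move=> le_ijx; have le_ix : (i <= x)%N by apply: leq_trans le_ijx; apply: leq_addr.
have le_jxi : (j <= x - i)%N by rewrite leq_subRL // addnC.
apply/eqP; rewrite -(@eqn_pmul2r (i`! * j`! * (x - i - j)`!)) ?muln_gt0 ?fact_gt0 //.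
have -> : ('C(x, i) * 'C(x - i, j) * (i`! * j`! * (x - i - j)`!) = x`!)%N.
  by rewrite -(bin_fact le_ix) -(bin_fact le_jxi); ring.
apply/eqP; rewrite -(bin_fact le_ijx) -(bin_fact (leq_addr j i)) addKn subnDA; ring.
Qed.

Local Open Scope ring_scope.

Section BinomialConvolution.
Variable R : comPzSemiRingType.
Implicit Types (v : seq nat) (h : seq nat -> seq nat -> R).

(* Both sides enumerate the decompositions x = i + j + k with weight x!/(i! j! k!). *)
Lemma big_trinomial_reassoc x (W : nat -> nat -> nat -> R) :
  \sum_(0 <= i < x.+1) \sum_(0 <= j < (x - i).+1)
     ('C(x, i) * 'C(x - i, j))%:R * W i j (x - i - j)%N =
  \sum_(0 <= k < x.+1) \sum_(0 <= m < k.+1)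
     ('C(x, k) * 'C(k, m))%:R * W m (k - m)%N (x - k)%N.
Proof.
pose T i k := if (i <= k)%N then ('C(x, k) * 'C(k, i))%:R * W i (k - i)%N (x - k)%N
              else 0.
transitivity (\sum_(0 <= i < x.+1) \sum_(0 <= k < x.+1) T i k); last first.
  rewrite exchange_big; apply: eq_big_nat => k /andP[_ lt_kx].
  rewrite (big_cat_nat (n := k.+1)) //= [X in _ + X]big_nat [X in _ + X]big1 ?addr0.
    by apply: eq_big_nat => i /andP[_ lt_ik]; rewrite /T -ltnS lt_ik.
  by move=> i /andP[lt_ki _]; rewrite /T leqNgt lt_ki.
apply: eq_big_nat => i /andP[_ lt_ix].
symmetry; rewrite (big_cat_nat (n := i)) //=; last exact: ltnW.
rewrite [X in X + _]big_nat [X in X + _]big1 ?add0r; last first.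
  by move=> k /andP[_ lt_ki]; rewrite /T leqNgt lt_ki.
rewrite -[X in index_iota X _]add0n big_addn subSn //.
apply: eq_big_nat => j /andP[_ lt_jxi]; rewrite /T leq_addl addnK addnC.
by rewrite -mul_bin_trinomial ?subnDA // -leq_subRL // -ltnS.
Qed.

Definition bconv v h : R := \sum_(a <- boxes v) (vbinom v a)%:R * h a (vsub v a).

Lemma bconv_nil h : bconv [::] h = h [::] [::].
Proof. by rewrite /bconv /= big_seq1 /vbinom big_nil mul1r. Qed.

Lemma bconv_cons x l h :
  bconv (x :: l) h = \sum_(0 <= i < x.+1)
    'C(x, i)%:R * bconv l (fun s c => h (i :: s) ((x - i)%N :: c)).
Proof.
rewrite /bconv boxes_cons big_allpairs_dep; apply: eq_bigr => i _.
rewrite big_distrr; apply: eq_bigr => s _.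
by rewrite /vbinom /= big_cons natrM mulrA.
Qed.

Lemma eq_bconv v h h' : (forall a c, h a c = h' a c) -> bconv v h = bconv v h'.
Proof. by move=> e; apply: eq_bigr => a _; rewrite e. Qed.

Lemma bconv_sum (I : Type) (r : seq I) v (h : I -> seq nat -> seq nat -> R) :
  bconv v (fun a c => \sum_(i <- r) h i a c) = \sum_(i <- r) bconv v (h i).
Proof. by rewrite /bconv exchange_big; apply: eq_bigr => a _; rewrite big_distrr. Qed.

Lemma bconv_mull k v h : bconv v (fun a c => k * h a c) = k * bconv v h.
Proof. by rewrite /bconv big_distrr; apply: eq_bigr => a _; rewrite mulrCA. Qed.

Lemma bconv_assoc v (K : seq nat -> seq nat -> seq nat -> R) :
  bconv v (fun a c => bconv c (K a)) =
  bconv v (fun a c => bconv a (fun d e => K d e c)).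
Proof.
elim: v K => [|x l IH] K; first by rewrite !bconv_nil.
pose L i j k := bconv l (fun s c => bconv s (fun d e => K (i :: d) (j :: e) (k :: c))).
have -> : bconv (x :: l) (fun a c => bconv c (K a)) =
    \sum_(0 <= i < x.+1) \sum_(0 <= j < (x - i).+1)
      ('C(x, i) * 'C(x - i, j))%:R * L i j (x - i - j)%N.
  rewrite bconv_cons; apply: eq_bigr => i _.
  under eq_bconv do rewrite bconv_cons.
  rewrite bconv_sum big_distrr; apply: eq_bigr => j _.
  by rewrite bconv_mull IH natrM; exact: mulrA.
rewrite big_trinomial_reassoc bconv_cons; apply: eq_bigr => k _.
under [in RHS]eq_bconv do rewrite bconv_cons.
rewrite bconv_sum big_distrr; apply: eq_bigr => m _.
by rewrite bconv_mull natrM; exact/esym/mulrA.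
Qed.

Lemma bconv_unitl v (K : seq nat -> R) :
  bconv v (fun a c => (sumn a == 0)%:R * K c) = K v.
Proof.
elim: v K => [|x l IH] K; first by rewrite bconv_nil mul1r.
rewrite bconv_cons big_nat_recl // big_nat big1 ?addr0 => [|i _]; last first.
  by rewrite /bconv big1 ?mulr0 // => a _; rewrite /= mul0r mulr0.
rewrite bin0 mul1r -[RHS](IH (fun c => K (x :: c))).
by apply: eq_bconv => s c; rewrite /= add0n subn0.
Qed.

Definition ptn_invariant h :=
  forall a a' c c', ptn a = ptn a' -> ptn c = ptn c' -> h a c = h a' c'.

Lemma ptn_invariant_cons h i j :
  ptn_invariant h -> ptn_invariant (fun s c => h (i :: s) (j :: c)).
Proof. by move=> hP a a' c c' /(ptn_cons i) ? /(ptn_cons j) ?; apply: hP. Qed.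

Lemma bconv_swap x y l h :
  ptn_invariant h -> bconv (x :: y :: l) h = bconv (y :: x :: l) h.
Proof.
move=> hP; have E x' y' h' : bconv (x' :: y' :: l) h' =
   \sum_(0 <= i < x'.+1) \sum_(0 <= j < y'.+1) ('C(x', i) * 'C(y', j))%:R *
      bconv l (fun s c => h' (i :: j :: s) ((x' - i)%N :: (y' - j)%N :: c)).
  rewrite bconv_cons; apply: eq_bigr => i _.
  rewrite bconv_cons big_distrr; apply: eq_bigr => j _.
  by rewrite natrM; exact: mulrA.
rewrite !E exchange_big; apply: eq_bigr => j _; apply: eq_bigr => i _.
rewrite mulnC; congr (_ * _); apply: eq_bconv => s c.
by apply: hP; apply: ptn_perm; apply/permPl; exact: (perm_catCA [:: _] [:: _]).
Qed.

Lemma bconv_perm v v' h : ptn_invariant h -> perm_eq v v' -> bconv v h = bconv v' h.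
Proof.
elim: v v' h => [|x l IH] v' h hP pvv'.
  by move: pvv'; rewrite perm_sym => /perm_nilP ->.
have xv' : x \in v' by rewrite -(perm_mem pvv') mem_head.
move: pvv'; case/splitPr: xv' => l1 l2.
rewrite perm_sym -[x :: l2]cat1s perm_catCA /= perm_cons perm_sym => pll.
have <- : bconv (x :: l1 ++ l2) h = bconv (l1 ++ x :: l2) h.
  elim: l1 h hP {pll} => // y l1 IH1 h hP.
  rewrite !cat_cons bconv_swap // !bconv_cons; apply: eq_bigr => j _.
  by rewrite IH1 //; apply: ptn_invariant_cons.
rewrite !bconv_cons; apply: eq_bigr => i _.
by rewrite (IH (l1 ++ l2)) //; apply: ptn_invariant_cons.
Qed.

Lemma bconv_drop0 v h : ptn_invariant h -> bconv v h = bconv [seq x <- v | 0 < x]%N h.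
Proof.
elim: v h => // -[|x] l IH h hP /=; last first.
  by rewrite !bconv_cons; apply: eq_bigr => i _; rewrite IH //; apply: ptn_invariant_cons.
rewrite bconv_cons big_nat1 bin0 mul1r -IH //.
by apply: eq_bconv => s c; apply: hP; rewrite ?subnn ptn_cons0.
Qed.

Lemma bconv_ptn v v' h : ptn_invariant h -> ptn v = ptn v' -> bconv v h = bconv v' h.
Proof.
by move=> hP /ptn_eqP pvv'; rewrite bconv_drop0 // [RHS]bconv_drop0 //; apply: bconv_perm.
Qed.

End BinomialConvolution.

Lemma big_families_vsub (R : nmodType) v w k (P : pred (seq (seq nat)))
    (E : seq (seq nat) -> R) : all2 leq w v ->
  \sum_(f <- families v k | (vsum (size v) f == w) && P f) E f =
  \sum_(f <- families w k | (vsum (size w) f == w) && P f) E f.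
Proof.
move=> le_wv; rewrite -(size_all2_leq le_wv) -[LHS]big_filter -[RHS]big_filter.
apply/perm_big/uniq_perm.
- exact/filter_uniq/uniq_families.
- exact/filter_uniq/uniq_families.
move=> f; rewrite !mem_filter !mem_families -!andbA; case: eqP => //= sum_f.
do 2!congr (_ && _); apply/allP/allP => le_f c cf.
  rewrite -sum_f; apply: vleq_vsum cf; apply/allP => d /le_f /size_all2_leq ->.
  by rewrite (size_all2_leq le_wv).
exact: all2_leq_trans (le_f c cf) le_wv.
Qed.

Section Association.
Variable F : numFieldType.
Implicit Types (G : seq nat -> F) (v b : seq nat) (f : seq (seq nat)).

Definition assoc_weight G v f : F :=
  (vfact v)%:R / (\prod_(a <- f) vfact a)%N%:R * \prod_(a <- f) G (ptn a).

Definition assoc_coef G v b : F :=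
  \sum_(f <- families v (size b) |
          (vsum (size v) f == v) && ([seq sumn a | a <- f] == b))
     assoc_weight G v f.

Lemma assoc_weight_cons G v a f : all2 leq a v ->
  assoc_weight G v (a :: f) = (vbinom v a)%:R * G (ptn a) * assoc_weight G (vsub v a) f.
Proof.
move=> le_av; rewrite /assoc_weight !big_cons (vfact_vbinom le_av) !natrM.
have a0 : (vfact a)%:R != 0 :> F by rewrite pnatr_eq0 -lt0n vfact_gt0.
have f0 : (\prod_(x <- f) vfact x)%N%:R != 0 :> F.
  by rewrite pnatr_eq0 -lt0n prodn_gt0 // => x; apply: vfact_gt0.
by field; rewrite a0 f0.
Qed.

Lemma assoc_coef_nil G v : assoc_coef G v [::] = (sumn v == 0)%:R.
Proof.
rewrite /assoc_coef /= big_mkcond big_seq1 vsum_nil_eq eqxx andbT.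
case: eqP => // /vfact_eq1 v1.
by rewrite /assoc_weight !big_nil v1 divr1 mulr1.
Qed.

Lemma assoc_coef_cons G v (b1 : nat) b :
  assoc_coef G v (b1 :: b) =
  bconv v (fun a c => (sumn a == b1)%:R * G (ptn a) * assoc_coef G c b).
Proof.
rewrite /assoc_coef families_cons big_mkcond big_allpairs_dep.
apply: eq_big_seq => a; rewrite mem_boxes => le_av; rewrite -big_mkcond.
transitivity (\sum_(f <- families v (size b) | (sumn a == b1) &&
    ((vsum (size v) f == vsub v a) && ([seq sumn x | x <- f] == b)))
  assoc_weight G v (a :: f)).
  rewrite big_seq_cond [RHS]big_seq_cond; apply: eq_bigl => f.
  apply: andb_id2l; rewrite mem_families => /andP[_ /allP le_f].
  have size_f : all (fun c => size c == size v) f.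
    by apply/allP => c /le_f /size_all2_leq ->.
  by rewrite vsum_cons vadd_eq_vsub ?size_vsum // eqseq_cons andbCA.
case: eqP => _; last by rewrite big_pred0 // mul0r mul0r mulr0.
rewrite big_families_vsub ?vleq_subr ?(size_all2_leq le_av) // mul1r !big_distrr /=.
by apply: eq_bigr => f _; rewrite assoc_weight_cons // -mulrA.
Qed.

Lemma assoc_coef_ptn G v v' b : ptn v = ptn v' -> assoc_coef G v b = assoc_coef G v' b.
Proof.
elim: b v v' => [|b1 b IH] v v' vv'.
  by rewrite !assoc_coef_nil -sumn_ptn vv' sumn_ptn.
rewrite !assoc_coef_cons; apply: bconv_ptn => // a a' c c' aa' cc'.
by rewrite -sumn_ptn aa' sumn_ptn (IH _ _ cc').
Qed.

Lemma assoc_coef_cat G v b g :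
  assoc_coef G v (b ++ g) = bconv v (fun a c => assoc_coef G a b * assoc_coef G c g).
Proof.
elim: b v => [|b1 b IH] v.
  rewrite -[LHS](bconv_unitl v (assoc_coef G ^~ g)).
  by apply: eq_bconv => a c; rewrite assoc_coef_nil.
rewrite cat_cons assoc_coef_cons.
under eq_bconv do rewrite IH -bconv_mull.
rewrite bconv_assoc; apply: eq_bconv => a c.
rewrite assoc_coef_cons mulrC -bconv_mull; apply: eq_bconv => d e.
by rewrite [RHS]mulrC -!mulrA.
Qed.

End Association.

Section SymmetricFunctions.
Variables (F : numClosedFieldType) (p : seq nat -> symfun F).

Lemma full_sequence_homogeneous lam b : full_sequence p -> is_partition lam ->
  mcoef (p lam) b != 0 -> sumn b = sumn lam.
Proof.
move=> full lam_p b_ne0; have [_ deg] := full lam lam_p.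
by have [<- _] := deg _ (ptn_partition b) b_ne0; rewrite sumn_ptn.
Qed.

Lemma binomial_type_unit : full_sequence p -> binomial_type p -> p [::] [::] = 1.
Proof.
move=> full bt; have [p0_ne0 _] := full [::] isT.
have p0_sqr : p [::] [::] = p [::] [::] * p [::] [::].
  by have := bt [::] isT [::] [::]; rewrite big_seq1 /vbinom big_nil mul1r.
by apply: (mulfI p0_ne0); rewrite mulr1 -p0_sqr.
Qed.

Lemma associated_binomial_type G : associated p G -> binomial_type p.
Proof.
move=> assG lam lam_p b g.
rewrite [LHS](assG lam lam_p) -/(assoc_coef G lam _) assoc_coef_cat.
apply: eq_bigr => a _; rewrite !(assG _ (ptn_partition _)) -!/(assoc_coef G _ _).
by rewrite !(assoc_coef_ptn _ _ (ptn_id _)) mulrA.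
Qed.

Lemma binomial_type_associated :
  (forall lam b, is_partition lam -> mcoef (p lam) b != 0 -> sumn b = sumn lam) ->
  p [::] [::] = 1 -> binomial_type p ->
  associated p (fun mu => mcoef (p mu) [:: sumn mu]).
Proof.
move=> hom p1 bt; pose G mu := mcoef (p mu) [:: sumn mu].
suff assG lam b : is_partition lam -> mcoef (p lam) b = assoc_coef G lam b.
  by move=> lam lam_p b; apply: assG.
elim: b lam => [|b1 b IH] lam lam_p.
  rewrite assoc_coef_nil partition_sumn_eq0 //.
  have [-> | lam_n0] := eqVneq lam [::]; first by rewrite mulr1n; exact: p1.
  apply/eqP; apply: contraNT lam_n0 => /(hom _ _ lam_p) /esym /eqP.
  by rewrite partition_sumn_eq0.
have coef1 a : mcoef (p (ptn a)) [:: b1] =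
    (sumn a == b1)%:R * mcoef (p (ptn a)) [:: sumn (ptn a)].
  rewrite sumn_ptn; have [<- | ne_ab1] := eqVneq (sumn a) b1; first by rewrite mul1r.
  rewrite mul0r; apply/eqP; apply: contraNT ne_ab1 => /(hom _ _ (ptn_partition a)).
  by rewrite /= addn0 sumn_ptn => ->.
rewrite -cat1s bt // assoc_coef_cons; apply: eq_bigr => a _.
by rewrite coef1 IH ?ptn_partition // (assoc_coef_ptn _ _ (ptn_id _)) !mulrA.
Qed.

End SymmetricFunctions.

Theorem mainTheorem14 (F : numClosedFieldType) (p : seq nat -> symfun F) :
  full_sequence p ->
  (binomial_type p <-> exists G : seq nat -> F, quasi_genus G /\ associated p G).
Proof.
move=> full; split=> [bt | [G [_ assG]]]; last exact: associated_binomial_type assG.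
have p1 := binomial_type_unit full bt.
exists (fun mu => mcoef (p mu) [:: sumn mu]); split; first exact: p1.
by apply: binomial_type_associated p1 bt => lam b; apply: full_sequence_homogeneous.
Qed.
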